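(* For every signaling scheme $\mathcal{Z}$ for $\mathcal{D}$ there exists an efficient signaling scheme $\mathcal{Z}^E$ for $\mathcal{D}$ such that: (1) $cs_{v_i}(\mathcal{Z}^E)=cs_{v_i}(\mathcal{Z})$ for every $i\in[n]$; (2) $\mathcal{Z}^E$ consists of at most $n$ signals, whose lowest supports (smallest values with nonzero mass) are pairwise distinct.
   Context: Values and prior. $0<v_1<\dots<v_n$ are reals, and $\mathcal{D}$ is a distribution on $\{v_1,\dots,v_n\}$ with $f_{\mathcal{D}}(v_i)>0$. Signals and pricing. A signal is a distribution $S$ on these values, with $G_S(p)=\Pr_{v\sim S}[v\ge p]$. The seller posts $p^*_S$, the smallest $v$ in the support of $S$ maximizing $v\,G_S(v)$. The surplus of value $v$ is $cs_v(S)=\mathbb{1}[v\ge p^*_S](v-p^*_S)$. Signaling schemes. A signaling scheme is $\mathcal{Z}=\{(S_q,\gamma_q)\}$ with $\gamma_q\ge0$, $\sum\gamma_q=1$ and $\sum_q\gamma_q f_{S_q}=f_{\mathcal{D}}$. Its expected consumer surplus at $v_i$ is $cs_{v_i}(\mathcal{Z})=\sum_q cs_{v_i}(S_q)\gamma_q f_{S_q}(v_i)/f_{\mathcal{D}}(v_i)$. The scheme is efficient if for every signal $S_q$, $p^*_{S_q}$ is the smallest value in the support of $S_q$. *)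

From mathcomp Require Import all_boot all_order all_algebra.
Set Implicit Arguments. Unset Strict Implicit. Unset Printing Implicit Defensive.
Import Order.TTheory GRing.Theory Num.Theory.
Local Open Scope ring_scope.

Section Pricing.
Variables (R : realFieldType) (n : nat).

(* A signal: a probability mass function s on the values v_0 < ... < v_{n-1},
   given by its masses s i = f_S(v_i). *)
Definition signal := {ffun 'I_n -> R}.

Definition is_signal (s : signal) : Prop :=
  (forall i, 0 <= s i) /\ \sum_i s i = 1.

Definition G (v : 'I_n -> R) (s : signal) (p : R) : R :=
  \sum_(j | p <= v j) s j.

Definition revenue (v : 'I_n -> R) (s : signal) (i : 'I_n) : R :=
  v i * G v s (v i).

Definition is_price_idx (v : 'I_n -> R) (s : signal) (i : 'I_n) : bool :=
  [&& 0 < s i,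
      [forall j, (0 < s j) ==> (revenue v s j <= revenue v s i)] &
      [forall j, ((0 < s j) && (v j < v i)) ==> (revenue v s j < revenue v s i)]].

(* p*_S (defaults to 0 if undefined, which never happens for a signal) *)
Definition price (v : 'I_n -> R) (s : signal) : R :=
  if [pick i | is_price_idx v s i] is Some i then v i else 0.

Definition cs (v : 'I_n -> R) (s : signal) (x : R) : R :=
  if price v s <= x then x - price v s else 0.

(* smallest value in the support of s (0 if the support is empty) *)
Definition lowest_supp (v : 'I_n -> R) (s : signal) : R :=
  if [pick i | (0 < s i) && [forall j, (0 < s j) ==> (v i <= v j)]] is Some i
  then v i else 0.

Definition scheme := seq (signal * R).

Definition is_scheme (f : 'I_n -> R) (Z : scheme) : Prop :=
  (forall q, q \in Z -> 0 <= q.2 /\ is_signal q.1) /\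
  \sum_(q <- Z) q.2 = 1 /\
  (forall i, \sum_(q <- Z) q.2 * q.1 i = f i).

Definition cs_scheme (v f : 'I_n -> R) (Z : scheme) (i : 'I_n) : R :=
  \sum_(q <- Z) cs v q.1 (v i) * q.2 * q.1 i / f i.

Definition efficient (v : 'I_n -> R) (Z : scheme) : Prop :=
  forall q, q \in Z -> price v q.1 = lowest_supp v q.1.

End Pricing.

From mathcomp Require Import all_boot all_order all_algebra.
Set Implicit Arguments. Unset Strict Implicit. Unset Printing Implicit Defensive.
Import Order.TTheory GRing.Theory Num.Theory.
Local Open Scope ring_scope.

(* Split every signal of the scheme buyer by buyer: the mass of a value v_i at
   or above the price v_k of the signal goes to bucket k, the mass of a value
   below the price goes to bucket i.  In both cases the surplus of v_i from that
   mass is v_i - v_j, where j is its bucket, so surpluses are preserved as soon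
   as bucket j, normalised, is a signal priced at v_j, its lowest support point.
   It is, because the mass of bucket j strictly above v_j comes only from
   signals priced at v_j, whose revenue curves v G(v) are all maximised at v_j;
   summing them shows that no higher price earns more on bucket j.  There is one
   bucket per value, and empty buckets are dropped. *)

Section EfficientScheme.
Variables (R : realFieldType) (n : nat) (v : 'I_n -> R).
Hypothesis v_ge0 : forall i, 0 <= v i.
Hypothesis v_incr : forall i j : 'I_n, (i < j)%N -> v i < v j.
Implicit Types (i j k l m : 'I_n) (s : signal R n).

Lemma lev : {mono v : i j / (i <= j)%N >-> i <= j}.
Proof. exact: le_mono. Qed.

Lemma ltv : {mono v : i j / (i < j)%N >-> i < j}.
Proof. exact: leW_mono lev. Qed.

Lemma v_inj : injective v.
Proof. exact: inc_inj lev. Qed.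

Lemma G_idx s l : G v s (v l) = \sum_(i : 'I_n | (l <= i)%N) s i.
Proof. by apply: eq_bigl => i; rewrite lev. Qed.

Lemma G_ge0 s p : (forall i, 0 <= s i) -> 0 <= G v s p.
Proof. by move=> s_ge0; apply: sumr_ge0. Qed.

Lemma G_gap s l m : (l <= m)%N ->
  (forall i, (l <= i < m)%N -> s i = 0) -> G v s (v l) = G v s (v m).
Proof.
move=> lm gap; rewrite !G_idx (bigID (fun i : 'I_n => (m <= i)%N)) /=.
rewrite [X in _ + X]big1 ?addr0 => [|i /andP[li]]; last first.
  by rewrite -ltnNge => im; apply: gap; rewrite li.
apply: eq_bigl => i.
by case: (leqP m i) => [mi|]; rewrite ?andbF // (leq_trans lm mi).
Qed.

Lemma price_idxP s k : reflect
  [/\ 0 < s k, forall j, 0 < s j -> revenue v s j <= revenue v s k &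
      forall j, 0 < s j -> (j < k)%N -> revenue v s j < revenue v s k]
  (is_price_idx v s k).
Proof.
apply: (iffP and3P) => [[sk /forallP max_k /forallP min_k] | [sk max_k min_k]].
  split=> // j sj; first exact: implyP (max_k j) sj.
  by move=> jk; apply: (implyP (min_k j)); rewrite sj ltv.
split=> //; apply/forallP => j; apply/implyP; first exact: max_k.
by case/andP=> sj; rewrite ltv; apply: min_k.
Qed.

Lemma exists_price_idx s : is_signal s -> exists k, is_price_idx v s k.
Proof.
case=> s_ge0 s_sum1.
have /hasP[i0 _ /andP[_ si0]] : has (fun i => true && (0 < s i)) (index_enum 'I_n).
  by rewrite -psumr_neq0 // s_sum1 oner_neq0.
pose maximizer k :=
  (0 < s k) && [forall j, (0 < s j) ==> (revenue v s j <= revenue v s k)].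
have [i1 si1 max_i1] := arg_maxP (P := fun i => 0 < s i) (revenue v s) si0.
have max1 : maximizer i1.
  by rewrite /maximizer si1; apply/forallP => j; apply/implyP; apply: max_i1.
have [k /andP[sk /forallP max_k] min_k] :=
  arg_minnP (P := maximizer) (fun k : 'I_n => val k) max1.
exists k; apply/price_idxP; split=> // [j sj|j sj jk]; first exact: implyP (max_k j) sj.
rewrite lt_neqAle (implyP (max_k j) sj) andbT; apply: contraTneq jk => rev_jk.
rewrite -leqNgt; apply: min_k; rewrite /maximizer sj rev_jk; exact/forallP.
Qed.

Lemma price_idx_uniq s (k1 k2 : 'I_n) :
  is_price_idx v s k1 -> is_price_idx v s k2 -> k1 = k2.
Proof.
move=> /price_idxP[s1 max1 min1] /price_idxP[s2 max2 min2].
case: (ltngtP k1 k2) => [lt12 | lt21 | /val_inj //].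
  by have := min2 _ s1 lt12; rewrite ltNge max1.
by have := min1 _ s2 lt21; rewrite ltNge max2.
Qed.

Lemma priceE s k : is_price_idx v s k -> price v s = v k.
Proof.
move=> sk; rewrite /price.
by case: pickP => [k' /price_idx_uniq/(_ sk) -> // | /(_ k)]; rewrite sk.
Qed.

Lemma revenue_le_price s k l : (forall i, 0 <= s i) ->
  is_price_idx v s k -> revenue v s l <= revenue v s k.
Proof.
move=> s_ge0 /price_idxP[sk max_k _].
have s0 i : ~~ (0 < s i) -> s i = 0.
  by move=> si; apply/eqP; rewrite eq_le s_ge0 andbT leNgt.
pose above i := (l <= i)%N && (0 < s i).
have [/existsP[i0 above_i0] | /existsPn none] := boolP [exists i, above i].
  have [m /andP[lm sm] min_m] :=
    arg_minnP (P := above) (fun i : 'I_n => val i) above_i0.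
  have Glm : G v s (v l) = G v s (v m).
    apply: G_gap => // i /andP[li im]; apply: s0; apply: contraTN im => si.
    by rewrite -leqNgt min_m // /above li.
  apply: le_trans (max_k _ sm); rewrite /revenue Glm ler_wpM2r ?G_ge0 //.
  by rewrite lev.
rewrite /revenue G_idx big1 ?mulr0 => [|i li]; last first.
  by apply: s0; move: (none i); rewrite /above li.
by rewrite mulr_ge0 ?G_ge0.
Qed.

Lemma efficient_signal s j : 0 < s j ->
  (forall l, 0 < s l -> (j <= l)%N) ->
  (forall l, 0 < s l -> revenue v s l <= revenue v s j) ->
  price v s = v j /\ lowest_supp v s = v j.
Proof.
move=> sj low_j max_j; split.
  apply: priceE; apply/price_idxP; split=> // l sl.
  by rewrite ltnNge low_j.
rewrite /lowest_supp; case: pickP => [i /andP[si /forallP low_i] | /(_ j)].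
  apply/le_anti; rewrite (implyP (low_i j) sj) lev; exact: low_j.
rewrite sj; move/negP; case; apply/forallP => l; apply/implyP => sl.
by rewrite lev low_j.
Qed.

Definition bucket s i : 'I_n :=
  if [pick k | is_price_idx v s k] is Some k then (if (k <= i)%N then k else i)
  else i.

Lemma bucketE s k i :
  is_price_idx v s k -> bucket s i = if (k <= i)%N then k else i.
Proof.
move=> sk; rewrite /bucket.
by case: pickP => [k' /price_idx_uniq/(_ sk) -> // | /(_ k)]; rewrite sk.
Qed.

Lemma bucket_le s i : (bucket s i <= i)%N.
Proof. by rewrite /bucket; case: pick => [k|//]; case: ifP. Qed.

Lemma bucket_above s i j : is_signal s -> (j < i)%N ->
  (bucket s i == j) = is_price_idx v s j.
Proof.
move=> /exists_price_idx[k sk] ji; rewrite (bucketE _ sk).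
apply/idP/idP => [| /price_idx_uniq/(_ sk) <-]; last by rewrite ltnW.
by case: ifP => [_ /eqP <- // | _ /eqP ij]; move: ji; rewrite ij ltnn.
Qed.

Lemma cs_bucket s k i :
  is_price_idx v s k -> cs v s (v i) = v i - v (bucket s i).
Proof.
move=> sk; rewrite /cs (priceE sk) (bucketE _ sk) lev.
by case: ifP => // _; rewrite subrr.
Qed.

Section Buckets.
Variable Z : scheme R n.
Hypothesis Z_signals : forall q, q \in Z -> 0 <= q.2 /\ is_signal q.1.

Definition mass j i : R := \sum_(q <- Z | bucket q.1 i == j) q.2 * q.1 i.

Definition weight j : R := \sum_i mass j i.

Definition bucket_signal j : signal R n := [ffun i => mass j i / weight j].

Definition efficient_scheme : scheme R n :=
  [seq (bucket_signal j, weight j) | j <- enum 'I_n & 0 < weight j].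

Lemma share_ge0 q i : q \in Z -> 0 <= q.2 * q.1 i.
Proof. by case/Z_signals => q2_ge0 [q1_ge0 _]; rewrite mulr_ge0. Qed.

Lemma mass_ge0 j i : 0 <= mass j i.
Proof. by rewrite /mass big_seq_cond sumr_ge0 // => q /andP[/share_ge0]. Qed.

Lemma weight_ge0 j : 0 <= weight j.
Proof. by apply: sumr_ge0 => i _; apply: mass_ge0. Qed.

Lemma sum_mass_weighted (F : 'I_n -> R) i :
  \sum_j F j * mass j i = \sum_(q <- Z) F (bucket q.1 i) * (q.2 * q.1 i).
Proof.
under eq_bigr do rewrite /mass mulr_sumr.
rewrite (exchange_big_dep predT) //=; apply: eq_bigr => q _.
by rewrite (big_pred1 (bucket q.1 i)) // => j; rewrite eq_sym.
Qed.

Lemma sum_mass i : \sum_j mass j i = \sum_(q <- Z) q.2 * q.1 i.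
Proof.
have := sum_mass_weighted (fun=> 1) i.
by under eq_bigr do rewrite mul1r; under [in RHS]eq_bigr do rewrite mul1r.
Qed.

Lemma mass_below j i : (i < j)%N -> mass j i = 0.
Proof.
move=> ij; rewrite /mass big1 // => q /eqP bj.
by have := bucket_le q.1 i; rewrite bj leqNgt ij.
Qed.

Lemma mass_gt0P j i :
  reflect (exists2 q, q \in Z & (bucket q.1 i == j) && (0 < q.2 * q.1 i))
          (0 < mass j i).
Proof.
rewrite lt0r mass_ge0 andbT /mass big_seq_cond psumr_neq0; last first.
  by move=> q /andP[/share_ge0].
apply: (iffP hasP) => [[q qZ /andP[/andP[_ bj] share]] | [q qZ /andP[bj share]]].
  by exists q; rewrite ?bj.
by exists q; rewrite ?qZ ?bj.
Qed.

(* Mass of bucket [j] above [j] comes from a signal priced at [v j], which also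
   puts mass on [v j]. *)
Lemma mass_diag_gt0 j i : 0 < mass j i -> 0 < mass j j.
Proof.
have [-> // | ji] := eqVneq j i.
case/mass_gt0P => q qZ /andP[bj share].
have [q2_ge0 q_signal] := Z_signals qZ.
have lt_ji : (j < i)%N by rewrite ltn_neqAle ji -(eqP bj) bucket_le.
have qj : is_price_idx v q.1 j by rewrite -(bucket_above q_signal lt_ji).
have q2_gt0 : 0 < q.2.
  by rewrite lt0r q2_ge0 andbT; apply: contraTneq share => ->; rewrite mul0r ltxx.
apply/mass_gt0P; exists q; rewrite // (bucketE _ qj) leqnn eqxx mulr_gt0 //.
by case/price_idxP: qj.
Qed.

Lemma weight_gt0_mass j : 0 < weight j -> 0 < mass j j.
Proof.
rewrite lt0r weight_ge0 andbT psumr_neq0 => [|i _]; last exact: mass_ge0.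
by case/hasP => i _ /mass_diag_gt0.
Qed.

Lemma weight0_mass j i : weight j = 0 -> mass j i = 0.
Proof. by move/psumr_eq0P; apply=> // l _; apply: mass_ge0. Qed.

Lemma weight_bucket_signal j i : weight j * bucket_signal j i = mass j i.
Proof.
have [w0 | w_neq0] := eqVneq (weight j) 0; first by rewrite w0 mul0r weight0_mass.
by rewrite ffunE mulrCA mulfV ?mulr1.
Qed.

Lemma bucket_signal_is_signal j : 0 < weight j -> is_signal (bucket_signal j).
Proof.
move=> w_gt0; split=> [i|]; first by rewrite ffunE divr_ge0 ?mass_ge0 ?weight_ge0.
under eq_bigr do rewrite ffunE.
by rewrite -mulr_suml mulfV ?gt_eqF.
Qed.

Definition priced_mass j i : R :=
  \sum_(q <- Z | is_price_idx v q.1 j) q.2 * q.1 i.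

Lemma mass_above j i : (j < i)%N -> mass j i = priced_mass j i.
Proof.
move=> ji; rewrite /mass /priced_mass big_seq_cond [RHS]big_seq_cond.
apply: eq_bigl => q; apply/andb_id2l => /Z_signals[_ q_signal].
exact: bucket_above.
Qed.

Lemma priced_mass_le j i : (j <= i)%N -> priced_mass j i <= mass j i.
Proof.
move=> ji; rewrite /mass /priced_mass big_mkcond [X in _ <= X]big_mkcond /=.
rewrite big_seq [X in _ <= X]big_seq; apply: ler_sum => q qZ.
case: ifP => [qj | _]; first by rewrite (bucketE _ qj) ji eqxx.
by case: ifP => // _; apply: share_ge0.
Qed.

Lemma priced_mass_revenue j l :
  v l * \sum_(i : 'I_n | (l <= i)%N) priced_mass j i =
  \sum_(q <- Z | is_price_idx v q.1 j) q.2 * revenue v q.1 l.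
Proof.
rewrite /priced_mass exchange_big mulr_sumr; apply: eq_bigr => q _.
by rewrite /revenue G_idx !mulr_sumr; apply: eq_bigr => i _; rewrite mulrCA.
Qed.

Lemma mass_revenue j l : (j < l)%N ->
  v l * \sum_(i : 'I_n | (l <= i)%N) mass j i <=
  v j * \sum_(i : 'I_n | (j <= i)%N) mass j i.
Proof.
move=> jl; rewrite (eq_bigr (priced_mass j)) => [|i li]; last first.
  by rewrite mass_above // (leq_trans jl li).
apply: (@le_trans _ _ (v j * \sum_(i : 'I_n | (j <= i)%N) priced_mass j i)).
  rewrite !priced_mass_revenue big_seq_cond [X in _ <= X]big_seq_cond.
  apply: ler_sum => q /andP[/Z_signals[q2_ge0 [q1_ge0 _]] qj].
  by rewrite ler_wpM2l // revenue_le_price.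
by apply: ler_wpM2l => //; apply: ler_sum => i; apply: priced_mass_le.
Qed.

Lemma revenue_bucket_signal j l :
  revenue v (bucket_signal j) l =
  v l * (\sum_(i : 'I_n | (l <= i)%N) mass j i) / weight j.
Proof.
rewrite /revenue G_idx; under eq_bigr do rewrite ffunE.
by rewrite -mulr_suml mulrA.
Qed.

Lemma bucket_signal_price j : 0 < weight j ->
  price v (bucket_signal j) = v j /\ lowest_supp v (bucket_signal j) = v j.
Proof.
move=> w_gt0.
have supp_j l : 0 < bucket_signal j l -> (j <= l)%N.
  by rewrite ffunE leqNgt; apply: contraTN => lj; rewrite mass_below // mul0r ltxx.
apply: efficient_signal => [|//|l /supp_j].
  by rewrite ffunE divr_gt0 ?weight_gt0_mass.
rewrite leq_eqVlt => /orP[/eqP/val_inj -> // | jl].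
rewrite !revenue_bucket_signal; apply: ler_wpM2r; last exact: mass_revenue.
by rewrite invr_ge0 weight_ge0.
Qed.

Lemma cs_bucket_signal j i :
  cs v (bucket_signal j) (v i) * mass j i = (v i - v j) * mass j i.
Proof.
have := weight_ge0 j; rewrite le_eqVlt => /predU1P[/esym w0 | w_gt0].
  by rewrite weight0_mass ?mulr0.
rewrite /cs (proj1 (bucket_signal_price w_gt0)) lev.
by case: leqP => // ij; rewrite mass_below ?mulr0.
Qed.

Lemma big_efficient_scheme (F : signal R n * R -> R) :
  (forall j, weight j = 0 -> F (bucket_signal j, weight j) = 0) ->
  \sum_(q <- efficient_scheme) F q = \sum_j F (bucket_signal j, weight j).
Proof.
move=> F0; rewrite big_map big_filter big_enum_cond big_mkcond /=.
apply: eq_bigr => j _; case: ifP => // /negbT.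
by rewrite lt0r weight_ge0 andbT negbK => /eqP/F0.
Qed.

Lemma efficient_scheme_is_scheme f :
  (forall i, \sum_(q <- Z) q.2 * q.1 i = f i) -> \sum_i f i = 1 ->
  is_scheme f efficient_scheme.
Proof.
move=> Z_f f_sum1; split; [|split].
- move=> q /mapP[j]; rewrite mem_filter => /andP[w_gt0 _] -> /=.
  by split; [exact: ltW | exact: bucket_signal_is_signal].
- rewrite big_efficient_scheme //= /weight exchange_big /= -f_sum1.
  by apply: eq_bigr => i _; rewrite sum_mass Z_f.
- move=> i; rewrite big_efficient_scheme => [|j /= ->]; last by rewrite mul0r.
  by under eq_bigr do rewrite /= weight_bucket_signal; rewrite sum_mass Z_f.
Qed.

Lemma efficient_scheme_efficient : efficient v efficient_scheme.
Proof.
move=> q /mapP[j]; rewrite mem_filter => /andP[w_gt0 _] -> /=.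
by have [-> ->] := bucket_signal_price w_gt0.
Qed.

Lemma cs_efficient_scheme f i :
  cs_scheme v f efficient_scheme i = cs_scheme v f Z i.
Proof.
rewrite /cs_scheme big_efficient_scheme => [|j /= ->]; last first.
  by rewrite !(mulr0, mul0r).
rewrite -!mulr_suml; congr (_ / f i).
under eq_bigr do rewrite /= -mulrA weight_bucket_signal cs_bucket_signal.
rewrite sum_mass_weighted big_seq [RHS]big_seq; apply: eq_bigr => q qZ.
have [k qk] := exists_price_idx (proj2 (Z_signals qZ)).
by rewrite (cs_bucket _ qk) mulrA.
Qed.

Lemma size_efficient_scheme : (size efficient_scheme <= n)%N.
Proof.
by rewrite size_map size_filter (leq_trans (count_size _ _)) ?size_enum_ord.
Qed.

Lemma uniq_lowest_supp_efficient_scheme :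
  uniq [seq lowest_supp v q.1 | q <- efficient_scheme].
Proof.
rewrite -map_comp (eq_in_map _ v _).1 => [|j]; last first.
  rewrite mem_filter => /andP[w_gt0 _] /=.
  by have [_ ->] := bucket_signal_price w_gt0.
by rewrite (map_inj_uniq v_inj) filter_uniq ?enum_uniq.
Qed.

End Buckets.
End EfficientScheme.

Theorem lemma9 (R : realFieldType) (n : nat) (v f : 'I_n -> R) :
  (forall i, 0 < v i) ->
  (forall i j : 'I_n, (i < j)%N -> v i < v j) ->
  (forall i, 0 < f i) ->
  \sum_i f i = 1 ->
  forall Z : scheme R n, is_scheme f Z ->
  exists ZE : scheme R n,
    [/\ is_scheme f ZE,
        efficient v ZE,
        (forall i, cs_scheme v f ZE i = cs_scheme v f Z i),
        (size ZE <= n)%N &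
        uniq [seq lowest_supp v q.1 | q <- ZE]].
Proof.
move=> v_gt0 v_incr _ f_sum1 Z [Z_signals [_ Z_f]].
have v_ge0 i : 0 <= v i := ltW (v_gt0 i).
exists (efficient_scheme v Z); split.
- exact: efficient_scheme_is_scheme.
- exact: efficient_scheme_efficient.
- exact: cs_efficient_scheme.
- exact: size_efficient_scheme.
- exact: uniq_lowest_supp_efficient_scheme.
Qed.
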